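(* Let $K\subseteq\mathbb{R}^m$ be closed, let $G:\mathbb{R}^n\to\mathbb{R}^m$ be second-order gph-regular at $x^*$, let $\Psi=\{x\in\mathbb{R}^n:G(x)\in K\}$ with $x^*\in\Psi$, and suppose that MSCQ for $\Psi$ holds at $x^*$. If $K$ is outer second-order regular at $G(x^* )$ in direction $G'(x^*;d)$, then $\Psi$ is outer second-order regular at $x^*$ in direction $d$. Furthermore, if $K$ is outer second-order regular at $G(x^* )$ (in every direction), then $\Psi$ is outer second-order regular at $x^*$ (in every direction).
   Context: Definitions. For $g:\mathbb{R}^n\to\mathbb{R}^k$: $g'(x;d)=\lim_{t\downarrow0}(g(x+td)-g(x))/t$; $g$ is second-order directionally differentiable at $x$ if for every $d$, $g'(x;d)$ exists and $g''(x;d,w):=\lim_{t\downarrow0}\frac{g(x+td+\frac12t^2w)-g(x)-tg'(x;d)}{\frac12t^2}$ exists for all $w$. $g$ is second-order gph-regular at $x^*$ if it is locally Lipschitz continuous and second-order directionally differentiable at $x^*$ and for every $d$ and every path $w:\mathbb{R}_+\to\mathbb{R}^n$ with $tw(t)\to0$ as $t\downarrow0$ there is $r$ with $\|r(t)\|/t^2\to0$ such that $g(x^*+td+\frac12t^2w(t))=g(x^* )+tg'(x^*;d)+\frac12t^2g''(x^*;d,w(t))+r(t)$ for $t\ge0$. For a set $C$ and $x^*\in C$: tangent cone $\mathcal{T}_C(x^* )=\{d:\exists t_k\downarrow0,d^k\to d,x^*+t_kd^k\in C\}$; for $d\in\mathcal{T}_C(x^* )$, $\mathcal{T}^2_C(x^*;d)=\{w:\exists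 t_k\downarrow0,w^k\to w,x^*+t_kd+\frac12t_k^2w^k\in C\}$ (outer second-order tangent set). $C$ is outer second-order regular at $x^*$ in direction $d$ if for every sequence $x^k=x^*+t_kd+\frac12t_k^2w^k\in C$ with $t_k\downarrow0$ and $t_kw^k\to0$, $\lim_k\mathrm{dist}(w^k,\mathcal{T}^2_C(x^*;d))=0$. MSCQ for $\Psi$ holds at $x^*$ if there are a neighborhood $U$ of $x^*$ and $\kappa>0$ with $\mathrm{dist}(x,\Psi)\le\kappa\,\mathrm{dist}(G(x),K)$ for all $x\in U$. *)

(* R : realType, R^n rendered as 'rV[R]_n with its
   canonical (sup) norm; all notions below are norm-independent. *)
From HB Require Import structures.
From mathcomp Require Import all_boot all_order all_algebra.
From mathcomp Require Import all_classical all_reals all_analysis.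
Set Implicit Arguments. Unset Strict Implicit. Unset Printing Implicit Defensive.
Import Order.TTheory GRing.Theory Num.Theory.
Import numFieldNormedType.Exports.
Local Open Scope classical_set_scope.
Local Open Scope ring_scope.

Section Defs.
Variable R : realType.

(* dist(x, C) = inf_{y in C} |x - y|, in \bar R (so dist(x, empty) = +oo) *)
Definition dist (n : nat) (x : 'rV[R]_n) (C : set 'rV[R]_n) : \bar R :=
  ereal_inf [set (`|x - y|)%:E | y in C].

Definition dir_deriv (n k : nat) (g : 'rV[R]_n -> 'rV[R]_k) (x d : 'rV[R]_n)
    (v : 'rV[R]_k) : Prop :=
  (fun t : R => t^-1 *: (g (x + t *: d) - g x)) @ 0^'+ --> v.

Definition dir_deriv2 (n k : nat) (g : 'rV[R]_n -> 'rV[R]_k) (x d w : 'rV[R]_n)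
    (v z : 'rV[R]_k) : Prop :=
  (fun t : R => (2^-1 * t ^+ 2)^-1 *:
     (g (x + t *: d + (2^-1 * t ^+ 2) *: w) - g x - t *: v)) @ 0^'+ --> z.

Definition loc_lipschitz_at (n k : nat) (g : 'rV[R]_n -> 'rV[R]_k) (x : 'rV[R]_n)
  : Prop :=
  exists e : R, 0 < e /\ exists L : R,
    forall y z, ball x e y -> ball x e z -> `|g y - g z| <= L * `|y - z|.

Definition so_gph_regular (n k : nat) (g : 'rV[R]_n -> 'rV[R]_k) (x : 'rV[R]_n)
  : Prop :=
  loc_lipschitz_at g x /\
  exists (g1 : 'rV[R]_n -> 'rV[R]_k) (g2 : 'rV[R]_n -> 'rV[R]_n -> 'rV[R]_k),
    (forall d, dir_deriv g x d (g1 d)) /\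
    (forall d w, dir_deriv2 g x d w (g1 d) (g2 d w)) /\
    (forall (d : 'rV[R]_n) (w : R -> 'rV[R]_n),
       (fun t : R => t *: w t) @ 0^'+ --> (0 : 'rV[R]_n) ->
       exists r : R -> 'rV[R]_k,
         (fun t : R => (t ^+ 2)^-1 *: r t) @ 0^'+ --> (0 : 'rV[R]_k) /\
         forall t : R, 0 <= t ->
           g (x + t *: d + (2^-1 * t ^+ 2) *: w t)
           = g x + t *: g1 d + (2^-1 * t ^+ 2) *: g2 d (w t) + r t).

(* t_k decreasing to 0 in the sense t_k > 0, t_k -> 0 *)
Definition pos_null_seq (t : nat -> R) : Prop :=
  (forall k, 0 < t k) /\ t @ \oo --> (0 : R).

Definition tangent_cone (n : nat) (C : set 'rV[R]_n) (x : 'rV[R]_n)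
  : set 'rV[R]_n :=
  [set d | exists (t : nat -> R) (dk : nat -> 'rV[R]_n),
     pos_null_seq t /\ dk @ \oo --> d /\ forall k, C (x + t k *: dk k)].

Definition so_tangent_set (n : nat) (C : set 'rV[R]_n) (x d : 'rV[R]_n)
  : set 'rV[R]_n :=
  [set w | exists (t : nat -> R) (wk : nat -> 'rV[R]_n),
     pos_null_seq t /\ wk @ \oo --> w /\
     forall k, C (x + t k *: d + (2^-1 * t k ^+ 2) *: wk k)].

Definition outer_so_regular (n : nat) (C : set 'rV[R]_n) (x d : 'rV[R]_n)
  : Prop :=
  forall (t : nat -> R) (wk : nat -> 'rV[R]_n),
    pos_null_seq t ->
    (fun k => t k *: wk k) @ \oo --> (0 : 'rV[R]_n) ->
    (forall k, C (x + t k *: d + (2^-1 * t k ^+ 2) *: wk k)) ->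
    (fun k => dist (wk k) (so_tangent_set C x d)) @ \oo --> 0%E.

Definition MSCQ (n m : nat) (G : 'rV[R]_n -> 'rV[R]_m) (K : set 'rV[R]_m)
    (x : 'rV[R]_n) : Prop :=
  exists e : R, 0 < e /\ exists kappa : R, 0 < kappa /\
    forall y, ball x e y ->
      (dist y (G @^-1` K) <= kappa%:E * dist (G y) K)%E.

End Defs.

(* MSCQ transfers second-order tangents from K back to
   Psi: correcting the points x + s d + s^2/2 w by the subregularity error bound
   and extracting a convergent subsequence of the corrections gives
   dist(w, T2_Psi(x;d)) <= kappa dist(G''(x;d,w), T2_K(G x; G'(x;d))).
   For a sequence x + t_k d + t_k^2/2 w_k in Psi with t_k w_k -> 0, one may pass
   to a subsequence with t_k strictly decreasing, so that the w_k lie on a path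
   w(t); gph-regularity along that path writes G of the points as
   G x + t_k G'(x;d) + t_k^2/2 z_k with z_k - G''(x;d,w_k) -> 0, and the Lipschitz
   bound gives t_k z_k -> 0.  Outer regularity of K makes dist(z_k, T2_K) -> 0,
   hence dist(w_k, T2_Psi) -> 0. *)

From mathcomp Require Import all_boot all_order all_algebra.
From mathcomp Require Import all_classical all_reals all_analysis.
From mathcomp Require Import ring lra.
Import Order.TTheory GRing.Theory Num.Theory.
Import numFieldNormedType.Exports.
Local Open Scope classical_set_scope.
Local Open Scope ring_scope.

Local Notation half_sq t := (2^-1 * t ^+ 2).

Lemma half_sq_gt0 {R : realFieldType} [t : R] : 0 < t -> 0 < half_sq t.
Proof. by move=> t0; rewrite mulr_gt0 ?invr_gt0 ?exprn_gt0. Qed.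

Section Sequences.
Context {R : realType}.

Lemma pos_null_seq_cvg_at_right [t : nat -> R] : pos_null_seq t -> t @ \oo --> 0^'+.
Proof.
move=> [t_gt0 t0] B /t0 tB; change (\forall k \near \oo, B (t k)).
have {}tB : \forall k \near \oo, 0 < t k -> B (t k) := tB.
by apply: filterS tB => k; apply.
Qed.

Lemma cvg_subseq {T : topologicalType} [f : nat -> T] [phi : nat -> nat] [a : T] :
  (forall j, (j <= phi j)%N) -> f @ \oo --> a -> (f \o phi) @ \oo --> a.
Proof.
move=> phi_ge fa B /fa [N _ fB]; exists N => // j /= Nj.
exact/fB/(leq_trans Nj).
Qed.

Lemma pos_null_seq_subseq [t : nat -> R] [phi : nat -> nat] :
  (forall j, (j <= phi j)%N) -> pos_null_seq t -> pos_null_seq (t \o phi).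
Proof. by move=> phi_ge [t_gt0 t0]; split=> [j|]; [exact: t_gt0 | exact: cvg_subseq]. Qed.

Lemma cvge0_ge0P (f : nat -> \bar R) : (forall k, 0 <= f k)%E ->
  f @ \oo --> 0%E <-> forall e : R, 0 < e -> \forall k \near \oo, (f k <= e%:E)%E.
Proof.
move=> f_ge0; split=> [/fine_cvgP[f_fin f0] e e0|fe].
  near=> k; have /fineK <- : f k \is a fin_num by near: k.
  rewrite lee_fin (le_trans (ler_norm _)) // -[fine _]subr0 -normrN opprB.
  by near: k; exact: (cvgrPdist_le _ _).1 f0 e e0.
apply/fine_cvgP; split.
  by apply: filterS (fe 1 ltr01) => k fk; rewrite ge0_fin_numE // (le_lt_trans fk) ?ltry.
apply/cvgrPdist_le => e e0; apply: filterS (fe e e0) => k /=.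
by move: (f_ge0 k); case: (f k) => [r||] //=; rewrite !lee_fin sub0r normrN => /ger0_norm ->.
Unshelve. all: end_near.
Qed.

Lemma pos_null_seq_decreasing_subseq [t : nat -> R] [P : nat -> Prop] :
  pos_null_seq t -> (forall N, exists2 k, (N <= k)%N & P k) ->
  exists phi : nat -> nat, [/\ forall j, (j <= phi j)%N, forall j, P (phi j)
                            & forall j, t (phi j.+1) < t (phi j)].
Proof.
move=> [t_gt0 t0] often.
have next i : exists k, [/\ (i < k)%N, t k < t i & P k].
  have [M _ tM] := (cvgrPdist_lt _ _).1 t0 (t i) (t_gt0 i).
  have [k] := often (maxn M i.+1); rewrite geq_max => /andP[Mk ik] Pk.
  by exists k; split=> //; move: (tM k Mk); rewrite /= sub0r normrN gtr0_norm.
have [nx nxP] := choice next; have [k0 _ Pk0] := often 0%N.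
exists (fun j => iter j nx k0); split=> [|[|j]|j] //=; try by case: (nxP (iter j nx k0)).
by elim=> // j IH; case: (nxP (iter j nx k0)) => /(leq_ltn_trans IH).
Qed.

Lemma interpolate_decreasing_seq {V : normedModType R} [t : nat -> R] [w : nat -> V] :
  (forall k, 0 < t k) -> (forall k, t k.+1 < t k) ->
  (fun k => t k *: w k) @ \oo --> 0 ->
  exists2 wp : R -> V, (forall k, wp (t k) = w k) & (fun s => s *: wp s) @ 0^'+ --> 0.
Proof.
move=> t_gt0 t_dec tw0.
have t_lt : {homo t : i j / (i < j)%N >-> j < i}.
  by apply: homo_ltn => // y x z /[swap]; exact: lt_trans.
have t_inj : injective t.
  by move=> i j tij; case: (ltngtP i j) => // /t_lt; rewrite tij ltxx.
pose wp (s : R) : V := if pselect (exists k, t k = s) is left h then w (projT1 (cid h)) else 0.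
have wpE k : wp (t k) = w k.
  rewrite /wp; case: pselect => [h|[]]; last by exists k.
  by case: (cid h) => j /= /t_inj ->.
exists wp => //; apply/cvgr0Pnorm_lt => e e0.
have [N _ twN] := (cvgr0Pnorm_lt _).1 tw0 e e0.
apply: filterS (nbhs_right_lt (t_gt0 N)) => s tNs.
rewrite /wp; case: pselect => [h|_]; last by rewrite scaler0 normr0.
case: (cid h) => k /= tks; rewrite -tks; apply: twN => /=.
by rewrite leqNgt; apply/negP => /t_lt; rewrite tks => /(lt_trans tNs); rewrite ltxx.
Qed.

End Sequences.

Lemma compact_cvg_subseq {R : realType} {V : normedModType R} [A : set V] [u : nat -> V] :
  compact A -> (forall j, A (u j)) ->
  exists2 a, A a & exists2 phi : nat -> nat,
    forall j, (j <= phi j)%N & (u \o phi) @ \oo --> a.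
Proof.
move=> cA Au; have [a [Aa ua]] : A `&` cluster (u @ \oo) !=set0.
  by apply: cA; exists 0%N => // j _; exact: Au.
exists a => //.
have near_a k : exists j, (k <= j)%N /\ `|a - u j| < k.+1%:R^-1.
  have [_ [[j kj <-]]] : [set u j | j in [set j | (k <= j)%N]] `&` ball a k.+1%:R^-1 !=set0.
    by apply: ua; [exists k => // j /= kj; exists j | apply: nbhsx_ballx].
  by rewrite -ball_normE; exists j.
have [phi phiP] := choice near_a; exists phi => [j|]; first by case: (phiP j).
apply/cvgrPdist_lt => e e0; near=> k; apply: lt_trans (phiP k).2 _.
by near: k; exact: near_infty_natSinv_lt (PosNum e0).
Unshelve. all: end_near.
Qed.

Section Distance.
Context {R : realType} {n : nat}.
Implicit Types (C : set 'rV[R]_n) (x y w : 'rV[R]_n).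

Lemma dist_ge0 x C : (0 <= dist x C)%E.
Proof. by apply: le_ereal_inf_tmp => _ [y _ <-]; rewrite lee_fin. Qed.

Lemma dist_le x [y C] : C y -> (dist x C <= (`|x - y|)%:E)%E.
Proof. by move=> Cy; apply: ereal_inf_lbound; exists y. Qed.

Lemma dist_lt_exists x C (e : R) : (dist x C < e%:E)%E -> exists2 y, C y & `|x - y| < e.
Proof. by case/ereal_inf_lt => _ [y Cy <-]; rewrite lte_fin; exists y. Qed.

Lemma dist_leD x y C : (dist x C <= (`|x - y|)%:E + dist y C)%E.
Proof.
rewrite -leeBlDl //; apply: le_ereal_inf_tmp => _ [z Cz <-].
rewrite leeBlDl // -EFinD (le_trans (dist_le x Cz)) // lee_fin; exact: ler_distD.
Qed.

Lemma so_tangent_set_dist_le [C x d w] [s : nat -> R] [rho : R] :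
  pos_null_seq s ->
  (\forall j \near \oo, exists2 u, `|w - u| <= rho &
     C (x + s j *: d + half_sq (s j) *: u)) ->
  (dist w (so_tangent_set C x d) <= rho%:E)%E.
Proof.
move=> s0 [N _ uN].
have /choice[u uP] j : exists u, `|w - u| <= rho /\
    C (x + s (j + N)%N *: d + half_sq (s (j + N)%N) *: u).
  by have [u] := uN _ (leq_addl j N); exists u.
pose A := closed_ball_ Num.norm w rho.
have cA : compact A.
  apply: bounded_closed_compact; last exact: closed_closed_ball_.
  rewrite /bounded_set /bounded_near; near=> M => y /= wy.
  have : `|w| + rho <= M by near: M; apply: nbhs_pinfty_ge; rewrite num_real.
  by move: wy; rewrite /A /closed_ball_ /=; have := ler_distD w 0 y; rewrite !sub0r !normrN; lra.
have [a Aa [phi phi_ge ua]] := compact_cvg_subseq cA (fun j => (uP j).1).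
apply: le_trans (dist_le w (_ : so_tangent_set C x d a)) _; last by rewrite lee_fin.
exists (s \o (fun j => phi j + N)%N), (u \o phi); split; [|split] => //=.
- by apply: pos_null_seq_subseq s0 => j; rewrite (leq_trans (phi_ge j)) ?leq_addr.
- by move=> j; exact: (uP (phi j)).2.
Unshelve. all: end_near.
Qed.

End Distance.

Lemma dir_deriv_lipschitz_perturbed {R : realType} {n k : nat}
    [G : 'rV[R]_n -> 'rV[R]_k] [x d : 'rV[R]_n] [v : 'rV[R]_k]
    [t : nat -> R] [e : nat -> 'rV[R]_n] :
  loc_lipschitz_at G x -> dir_deriv G x d v -> pos_null_seq t ->
  (fun j => (t j)^-1 *: e j) @ \oo --> (0 : 'rV[R]_n) ->
  (fun j => (t j)^-1 *: (G (x + t j *: d + e j) - G x)) @ \oo --> v.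
Proof.
move=> [r [r_gt0 [L G_lip]]] Gd t0 te0.
have e0 : e @ \oo --> (0 : 'rV[R]_n).
  have -> : e = (fun j => t j *: ((t j)^-1 *: e j)).
    by apply/funext => j; rewrite scalerA mulfV ?scale1r // gt_eqF //; exact: t0.1.
  by rewrite -(scale0r (0 : 'rV[R]_n)); apply: cvgZ (t0.2) te0.
have xtd : (fun j => x + t j *: d) @ \oo --> x + 0 *: d.
  by apply: cvgD; [exact: cvg_cst | exact: cvgZ (t0.2) (cvg_cst d)].
rewrite scale0r addr0 in xtd.
have xtde : (fun j => x + t j *: d + e j) @ \oo --> x + 0 by exact: cvgD.
rewrite addr0 in xtde.
have -> : (fun j => (t j)^-1 *: (G (x + t j *: d + e j) - G x)) =
    (fun j => (t j)^-1 *: (G (x + t j *: d + e j) - G (x + t j *: d)) +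
              (t j)^-1 *: (G (x + t j *: d) - G x)).
  by apply/funext => j; rewrite -scalerDr addrA subrK.
rewrite -[v]add0r; apply: cvgD; last exact: (cvg_comp _ _ (pos_null_seq_cvg_at_right t0) Gd).
have upper : (fun j => `|L| * `|(t j)^-1 *: e j|) @ \oo --> 0.
  by rewrite -(mulr0 `|L|) -(normr0 'rV[R]_n); apply: cvgM (cvg_cst _) (cvg_norm te0).
apply: norm_cvg0; apply: (squeeze_cvgr _ (cvg_cst 0) upper).
near=> j; rewrite normr_ge0 /= !normrZ mulrCA ler_wpM2l //.
have ball1 : ball x r (x + t j *: d + e j) by near: j; exact: xtde _ (nbhsx_ballx x r r_gt0).
have ball2 : ball x r (x + t j *: d) by near: j; exact: xtd _ (nbhsx_ballx x r r_gt0).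
have := G_lip _ _ ball1 ball2.
rewrite [_ + e j - _]addrC addKr => /le_trans; apply.
by rewrite ler_wpM2r ?ler_norm.
Unshelve. all: end_near.
Qed.

Section PreimageSecondOrderTangents.
Context {R : realType} {n m : nat} {K : set 'rV[R]_m} {G : 'rV[R]_n -> 'rV[R]_m}.
Context {x : 'rV[R]_n} {g1 : 'rV[R]_n -> 'rV[R]_m} {g2 : 'rV[R]_n -> 'rV[R]_n -> 'rV[R]_m}.
Hypothesis G1 : forall d, dir_deriv G x d (g1 d).
Hypothesis G2 : forall d w, dir_deriv2 G x d w (g1 d) (g2 d w).
Context {delta kappa : R}.
Hypotheses (delta_gt0 : 0 < delta) (kappa_gt0 : 0 < kappa).
Hypothesis subregular : forall y, ball x delta y ->
  (dist y (G @^-1` K) <= kappa%:E * dist (G y) K)%E.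

Local Notation Psi := (G @^-1` K).

Lemma so_tangent_preimage_dist_lt d w (c : R) :
  (dist (g2 d w) (so_tangent_set K (G x) (g1 d)) < c%:E)%E ->
  (dist w (so_tangent_set Psi x d) <= (kappa * c)%:E)%E.
Proof.
move=> /dist_lt_exists[zeta [s [z [s0 [zc Kz]]]] zc_lt].
pose p j := x + s j *: d + half_sq (s j) *: w.
pose rho j := (half_sq (s j))^-1 *: (G (p j) - G x - s j *: g1 d).
have rhoc : rho @ \oo --> g2 d w := cvg_comp _ _ (pos_null_seq_cvg_at_right s0) (G2 d w).
have pc : p @ \oo --> x + 0 *: d + half_sq 0 *: w.
  apply: cvgD; first by apply: cvgD; [exact: cvg_cst | exact: cvgZ (s0.2) (cvg_cst d)].
  apply: cvgZ (cvg_cst w); apply: cvgM (cvg_cst _) _.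
  by rewrite expr2; apply: cvgM (s0.2) (s0.2).
rewrite scale0r expr2 !mulr0 scale0r !addr0 in pc.
have rho_near : \forall j \near \oo, `|rho j - z j| < c.
  exact: cvgr_lt (cvg_norm (cvgB rhoc zc)) _ zc_lt.
apply: (so_tangent_set_dist_le s0); near=> j.
have hj := half_sq_gt0 (s0.1 j).
have GpK : (dist (G (p j)) K <= (half_sq (s j) * `|rho j - z j|)%:E)%E.
  apply: le_trans (dist_le _ (Kz j)) _; rewrite lee_fin.
  have -> : G (p j) - (G x + s j *: g1 d + half_sq (s j) *: z j) =
      half_sq (s j) *: (rho j - z j).
    by rewrite scalerBr scalerA mulfV ?gt_eqF // scale1r !opprD !addrA.
  by rewrite normrZ gtr0_norm.
have : (dist (p j) Psi < (kappa * (half_sq (s j) * c))%:E)%E.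
  have p_ball : ball x delta (p j) by near: j; exact: pc _ (nbhsx_ballx x delta delta_gt0).
  apply: le_lt_trans (subregular _ p_ball) _.
  apply: le_lt_trans (lee_wpmul2l _ GpK) _; first by rewrite lee_fin ltW.
  by rewrite -EFinM lte_fin ltr_pM2l // ltr_pM2l //; near: j.
move=> /dist_lt_exists[q Psi_q pq]; exists (w + (half_sq (s j))^-1 *: (q - p j)).
  rewrite opprD addNKr normrN normrZ ger0_norm ?invr_ge0 ?(ltW hj) // distrC.
  rewrite -(ler_pM2l hj) mulrA mulfV ?gt_eqF // mul1r mulrCA; exact: ltW.
by rewrite scalerDr scalerA mulfV ?gt_eqF // scale1r addrA addrC subrK.
Unshelve. all: end_near.
Qed.

Lemma so_tangent_preimage_dist_le d w :
  (dist w (so_tangent_set Psi x d) <=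
   kappa%:E * dist (g2 d w) (so_tangent_set K (G x) (g1 d)))%E.
Proof.
move: (@so_tangent_preimage_dist_lt d w) (dist_ge0 (g2 d w) (so_tangent_set K (G x) (g1 d))).
case: (dist (g2 d w) _) => [D dist_lt _|_ _|//]; last by rewrite mulry gtr0_sg // mul1e leey.
apply/lee_addgt0Pr => e e0; rewrite -EFinM -EFinD.
have -> : kappa * D + e = kappa * (D + e / kappa) by field; rewrite gt_eqF.
by apply: dist_lt; rewrite lte_fin ltrDl divr_gt0.
Qed.

Hypothesis G_lip : loc_lipschitz_at G x.
Hypothesis G_expansion : forall (d : 'rV[R]_n) (w : R -> 'rV[R]_n),
  (fun t : R => t *: w t) @ 0^'+ --> (0 : 'rV[R]_n) ->
  exists r : R -> 'rV[R]_m,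
    (fun t : R => (t ^+ 2)^-1 *: r t) @ 0^'+ --> (0 : 'rV[R]_m) /\
    forall t : R, 0 <= t ->
      G (x + t *: d + half_sq t *: w t) = G x + t *: g1 d + half_sq t *: g2 d (w t) + r t.

Lemma so_expansion_decreasing_seq d [t : nat -> R] [w : nat -> 'rV[R]_n] :
  pos_null_seq t -> (forall k, t k.+1 < t k) ->
  (fun k => t k *: w k) @ \oo --> (0 : 'rV[R]_n) ->
  exists z : nat -> 'rV[R]_m,
    [/\ forall k, G (x + t k *: d + half_sq (t k) *: w k) =
                  G x + t k *: g1 d + half_sq (t k) *: z k,
        (fun k => t k *: z k) @ \oo --> (0 : 'rV[R]_m)
      & (fun k => g2 d (w k) - z k) @ \oo --> (0 : 'rV[R]_m)].
Proof.
move=> t0 t_dec tw0; have t_gt0 := t0.1.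
have [wp wpE wp0] := interpolate_decreasing_seq t_gt0 t_dec tw0.
have [rem [rem0 G_rem]] := G_expansion d _ wp0.
pose z k := g2 d (w k) + (half_sq (t k))^-1 *: rem (t k).
have Gz k : G (x + t k *: d + half_sq (t k) *: w k) =
    G x + t k *: g1 d + half_sq (t k) *: z k.
  rewrite -wpE G_rem ?(ltW (t_gt0 k)) // wpE scalerDr scalerA mulfV ?scale1r ?addrA //.
  by rewrite gt_eqF ?half_sq_gt0.
exists z; split=> //.
- have te0 : (fun k => (t k)^-1 *: (half_sq (t k) *: w k)) @ \oo --> (0 : 'rV[R]_n).
    have -> : (fun k => (t k)^-1 *: (half_sq (t k) *: w k)) = (fun k => 2^-1 *: (t k *: w k)).
      apply/funext => k; rewrite !scalerA; congr (_ *: _).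
      by field; rewrite gt_eqF.
    by rewrite -(scaler0 _ 2^-1); apply: cvgZ (cvg_cst _) tw0.
  have slope k : (t k)^-1 *: (G (x + t k *: d + half_sq (t k) *: w k) - G x) - g1 d =
      (2^-1 * t k) *: z k.
    rewrite Gz [G x + _]addrC addrAC addrK scalerDr !scalerA mulVf ?(gt_eqF (t_gt0 k)) //.
    rewrite scale1r addrAC subrr add0r; congr (_ *: _).
    by field; rewrite gt_eqF.
  have -> : (fun k => t k *: z k) = (fun k =>
      2 *: ((t k)^-1 *: (G (x + t k *: d + half_sq (t k) *: w k) - G x) - g1 d)).
    by apply/funext => k; rewrite slope scalerA mulrA mulfV ?mul1r.
  rewrite -(scaler0 _ 2) -(subrr (g1 d)); apply: cvgZ (cvg_cst _) (cvgB _ (cvg_cst _)).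
  exact: dir_deriv_lipschitz_perturbed G_lip (G1 d) t0 te0.
- have -> : (fun k => g2 d (w k) - z k) = (fun k => - (2 *: ((t k ^+ 2)^-1 *: rem (t k)))).
    by apply/funext => k; rewrite /z opprD addrA subrr sub0r scalerA invfM invrK.
  rewrite -oppr0 -(scaler0 _ 2); apply: cvgN; apply: cvgZ (cvg_cst _) _.
  exact: (cvg_comp _ _ (pos_null_seq_cvg_at_right t0) rem0).
Qed.

Lemma outer_so_regular_preimage_decreasing [d] [t : nat -> R] [w : nat -> 'rV[R]_n] :
  outer_so_regular K (G x) (g1 d) ->
  pos_null_seq t -> (forall k, t k.+1 < t k) ->
  (fun k => t k *: w k) @ \oo --> (0 : 'rV[R]_n) ->
  (forall k, Psi (x + t k *: d + half_sq (t k) *: w k)) ->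
  (fun k => dist (w k) (so_tangent_set Psi x d)) @ \oo --> 0%E.
Proof.
move=> K_reg t0 t_dec tw0 Psi_w.
have [z [Gz tz0 z_near]] := so_expansion_decreasing_seq d t0 t_dec tw0.
have z_tangent := K_reg t z t0 tz0 (fun k => eq_ind _ K (Psi_w k) _ (Gz k)).
apply: (@squeeze_cvge _ _ _ _ (cst 0%E) _ (fun k => kappa%:E *
    ((`|g2 d (w k) - z k|)%:E + dist (z k) (so_tangent_set K (G x) (g1 d))))%E).
- near=> k; rewrite /= dist_ge0 /=.
  apply: (le_trans (so_tangent_preimage_dist_le d (w k))).
  by apply: lee_wpmul2l; [rewrite lee_fin ltW | exact: dist_leD].
- exact: cvg_cst.
rewrite -[0%E](mule0 kappa%:E); apply: cvgeZl => //.
rewrite -[0%E]adde0; apply: cvgeD => //.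
apply: cvg_EFin; first exact: nearW.
by rewrite -(normr0 'rV[R]_m); apply: cvg_norm.
Unshelve. all: end_near.
Qed.

Lemma outer_so_regular_preimage d :
  outer_so_regular K (G x) (g1 d) -> outer_so_regular Psi x d.
Proof.
move=> K_reg t w t0 tw0 Psi_w.
apply/cvge0_ge0P => [k|e e0]; first exact: dist_ge0.
apply: contrapT => not_small.
have often N : exists2 k, (N <= k)%N & (e%:E < dist (w k) (so_tangent_set Psi x d))%E.
  apply: contrapT => none; apply: not_small; exists N => // k /= Nk.
  by rewrite leNgt; apply/negP => ek; apply: none; exists k.
have [phi [phi_ge phi_far phi_dec]] := pos_null_seq_decreasing_subseq t0 often.
have := outer_so_regular_preimage_decreasing K_reg (pos_null_seq_subseq phi_ge t0) phi_dec
  (cvg_subseq phi_ge tw0) (fun j => Psi_w (phi j)).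
move=> /(cvge0_ge0P _ (fun j => dist_ge0 _ _)) /(_ e e0) [N _ /(_ N (leqnn N))] /=.
by rewrite leNgt phi_far.
Qed.

End PreimageSecondOrderTangents.

Theorem proposition3p3 (R : realType) (n m : nat)
    (K : set 'rV[R]_m) (G : 'rV[R]_n -> 'rV[R]_m) (xs : 'rV[R]_n) :
  closed K ->
  so_gph_regular G xs ->
  (G @^-1` K) xs ->
  MSCQ G K xs ->
  (forall d v : _, dir_deriv G xs d v ->
     outer_so_regular K (G xs) v -> outer_so_regular (G @^-1` K) xs d) /\
  ((forall v, outer_so_regular K (G xs) v) ->
     forall d, outer_so_regular (G @^-1` K) xs d).
Proof.
move=> _ [G_lip [g1 [g2 [G1 [G2 G_exp]]]]] _ [delta [delta_gt0 [kappa [kappa_gt0 subreg]]]].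
have regular d := outer_so_regular_preimage G1 G2 delta_gt0 kappa_gt0 subreg G_lip G_exp d.
split=> [d v Gdv K_reg | K_reg d]; apply: regular; last exact: K_reg.
by rewrite (cvg_unique _ (G1 d) Gdv).
Qed.
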